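(* As formal power series in $y$, \[ \sum_{n\ge0}D_n(x)y^n=\frac{(1-xy+y)(1+x^2y^2)}{(1-xy)(1-xy^2)-xy^3}+(2x-1)y . \]
   Context: For $n\ge1$ let $\Xi_n$ be the poset on $\{x_1,\dots,x_n\}$ whose cover relations are exactly: $x_2\prec x_1$, $x_3\prec x_2$, and for $3\le i\le n-1$, $x_i\prec x_{i+1}$ if $i$ is odd and $x_{i+1}\prec x_i$ if $i$ is even (so $x_1>x_2>x_3<x_4>x_5<\cdots$). A filter of a poset is an up-closed subset. The matchable Lucas cube $\Omega_n$ is the graph whose vertices are the filters of $\Xi_n$, two filters adjacent iff one is obtained from the other by deleting a single element; $\Omega_0$ is the one-vertex graph. $d_{n,k}$ is the number of vertices of degree $k$ in $\Omega_n$ and $D_n(x)=\sum_{k\ge0}d_{n,k}x^k$ is the degree sequence polynomial. *)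

From mathcomp Require Import all_boot all_order all_algebra.
Set Implicit Arguments. Unset Strict Implicit. Unset Printing Implicit Defensive.
Import GRing.Theory.
Local Open Scope ring_scope.

(* Element i : 'I_n stands for x_(i+1). *)
(* xi_cover n a b  <->  x_(a+1) is covered by x_(b+1)  (x_(a+1) < x_(b+1)) *)
Definition xi_cover (n : nat) : rel 'I_n := fun a b =>
  let i := (a : nat).+1 in let j := (b : nat).+1 in
  [|| (i == 2%N) && (j == 1%N),
      (i == 3%N) && (j == 2%N),
      [&& (3 <= i)%N, (i <= n.-1)%N, odd i & j == i.+1]
    | [&& (3 <= j)%N, (j <= n.-1)%N, ~~ odd j & i == j.+1]].

Definition xi_le (n : nat) : rel 'I_n := connect (@xi_cover n).

Definition is_filter (n : nat) (F : {set 'I_n}) : bool :=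
  [forall a, forall b, (a \in F) && xi_le a b ==> (b \in F)].

Definition omega_adj (n : nat) (F G : {set 'I_n}) : bool :=
  [exists a, (a \in F) && (G == F :\ a)] || [exists a, (a \in G) && (F == G :\ a)].

Definition omega_deg (n : nat) (F : {set 'I_n}) : nat :=
  #|[set G : {set 'I_n} | is_filter G && omega_adj F G]|.

Definition dnk (n k : nat) : nat :=
  #|[set F : {set 'I_n} | is_filter F && (omega_deg F == k)]|.

(* D_n(x) = sum_k d_{n,k} x^k  (degrees are < number of subsets + 1) *)
Definition Dpoly (n : nat) : {poly int} :=
  \sum_(k < #|{set 'I_n}|.+1) (dnk n k)%:R *: 'X^k.

(* Polynomials in y with coefficients in Z[x] *)
Definition xv : {poly {poly int}} := ('X : {poly int})%:P.
Definition yv : {poly {poly int}} := 'X.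

Definition genDen : {poly {poly int}} :=
  (1 - xv * yv) * (1 - xv * yv ^+ 2) - xv * yv ^+ 3.
Definition genNum : {poly {poly int}} :=
  (1 - xv * yv + yv) * (1 + xv ^+ 2 * yv ^+ 2).
(* RHS times denominator: numerator + (2x - 1) y * denominator *)
Definition genRHSnum : {poly {poly int}} :=
  genNum + (2%:R * xv - 1) * yv * genDen.

From mathcomp Require Import all_boot all_order all_algebra.
From mathcomp Require Import ring zify.
Import GRing.Theory.
Set Implicit Arguments. Unset Strict Implicit. Unset Printing Implicit Defensive.

(* Encode a subset F of Xi_n by its bit string ((x_(i+1) \in F))_i.  Every cover
   relation of Xi_n joins two consecutive positions, so F is a filter iff each pair
   of adjacent bits respects the orientation of the cover between them, and
   toggling position i keeps a filter iff the (at most two) neighbours of i carry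
   the right bits.  Hence D_n is a sum over bit strings of x^(number of toggleable
   positions), a local statistic, and a transfer matrix on the last two bits gives
   D_(n+3) = x D_(n+2) + x D_(n+1) + (x - x^2) D_n for n >= 3, because the
   orientations of the covers are 2-periodic from position 1 on.  Together with
   D_0, ..., D_5 this is the claimed identity cleared of its denominator. *)

Section UpClosed.
Variables (T : finType) (e : rel T).

Definition up_closed (F : {set T}) : bool :=
  [forall a, forall b, (a \in F) && e a b ==> (b \in F)].

Lemma up_closedP (F : {set T}) :
  reflect (forall a b, a \in F -> e a b -> b \in F) (up_closed F).
Proof.
apply: (iffP forallP) => [F_up a b aF ab | F_up a].
  by have /forallP/(_ b)/implyP := F_up a; apply; rewrite aF.
by apply/forallP => b; apply/implyP => /andP[]; apply: F_up.
Qed.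

Lemma up_closed_connect (F : {set T}) :
  up_closed F = [forall a, forall b, (a \in F) && connect e a b ==> (b \in F)].
Proof.
apply/up_closedP/forallP => [F_up a | F_up a b aF ab].
  apply/forallP => b; apply/implyP => /andP[aF /connectP[p]].
  elim: p a aF => [|c p IHp] a aF /= => [_ -> // | /andP[ac pc] b_last].
  exact: IHp c (F_up a c aF ac) pc b_last.
by have /forallP/(_ b)/implyP := F_up a; apply; rewrite aF connect1.
Qed.

Hypothesis e_irr : irreflexive e.

Lemma up_closedD1 (F : {set T}) a : up_closed F ->
  up_closed (F :\ a) = [forall c, e c a ==> (c \notin F)].
Proof.
move=> /up_closedP F_up; apply/up_closedP/forallP => [Fa_up c | below_a c d].
  apply/implyP => ca; apply/negP => cF.
  suff: a \in F :\ a by rewrite setD11.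
  apply: (Fa_up c a) => //; rewrite in_setD1 cF andbT.
  by apply: contraTneq ca => ->; rewrite e_irr.
rewrite !in_setD1 => /andP[_ cF] cd; rewrite (F_up c d cF cd) andbT.
by apply: contraTneq cF => eq_da; have /implyP := below_a c; rewrite -eq_da; apply.
Qed.

Lemma up_closedU1 (F : {set T}) a : up_closed F ->
  up_closed (a |: F) = [forall d, e a d ==> (d \in F)].
Proof.
move=> /up_closedP F_up; apply/up_closedP/forallP => [Fa_up d | above_a c d].
  apply/implyP => ad; have /setU1P[eq_da|//] := Fa_up a d (setU11 a F) ad.
  by rewrite eq_da e_irr in ad.
rewrite !in_setU1 => /orP[/eqP-> | cF] cd; apply/orP; right.
  exact: implyP (above_a d) cd.
exact: F_up cF cd.
Qed.

End UpClosed.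

(* descent j <-> x_(j+2) < x_(j+1), i.e. the cover between positions j and j+1
   points down. *)
Definition descent (j : nat) : bool := (j == 0) || odd j.

Definition xi_covn (i j : nat) : bool :=
  ((j == i.+1) && ~~ descent i) || ((i == j.+1) && descent j).

Lemma xi_coverE n (a b : 'I_n) : xi_cover a b = xi_covn a b.
Proof.
case: a b => a lt_an [b lt_bn]; rewrite /xi_cover /xi_covn /descent /=.
move: (odd_double_half a) (odd_double_half b).
by case: (odd a); case: (odd b); lia.
Qed.

Lemma xi_cover_irr n : irreflexive (@xi_cover n).
Proof. by move=> a; rewrite xi_coverE /xi_covn; lia. Qed.

Lemma is_filter_up_closed n (F : {set 'I_n}) :
  is_filter F = up_closed (@xi_cover n) F.
Proof. by rewrite up_closed_connect. Qed.

Lemma forall_lower_cover n (a : 'I_n) (q : nat -> bool) :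
  [forall c, xi_cover c a ==> q c] =
  ((a.+1 < n) && descent a ==> q a.+1) && ((0 < a) && ~~ descent a.-1 ==> q a.-1).
Proof.
apply/forallP/andP => [q_below | [q_r q_l] c].
  split; apply/implyP => /andP[lt_a d_a].
    apply: implyP (q_below (Ordinal lt_a)) _.
    by rewrite xi_coverE /xi_covn /= eqxx d_a orbT.
  have lt_a1 : a.-1 < n by rewrite (leq_ltn_trans (leq_pred a)).
  apply: implyP (q_below (Ordinal lt_a1)) _; rewrite xi_coverE /xi_covn /= d_a.
  by rewrite prednK ?eqxx.
rewrite xi_coverE /xi_covn.
apply/implyP => /orP[/andP[/eqP eq_a d_c] | /andP[/eqP eq_c d_a]].
  by move: q_l; rewrite eq_a /= d_c.
by move: q_r; rewrite -eq_c ltn_ord d_a.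
Qed.

Lemma forall_upper_cover n (a : 'I_n) (q : nat -> bool) :
  [forall d, xi_cover a d ==> q d] =
  ((a.+1 < n) && ~~ descent a ==> q a.+1) && ((0 < a) && descent a.-1 ==> q a.-1).
Proof.
apply/forallP/andP => [q_above | [q_r q_l] d].
  split; apply/implyP => /andP[lt_a d_a].
    by apply: implyP (q_above (Ordinal lt_a)) _; rewrite xi_coverE /xi_covn /= eqxx d_a.
  have lt_a1 : a.-1 < n by rewrite (leq_ltn_trans (leq_pred a)).
  apply: implyP (q_above (Ordinal lt_a1)) _; rewrite xi_coverE /xi_covn /= d_a.
  by rewrite prednK ?eqxx ?orbT.
rewrite xi_coverE /xi_covn.
apply/implyP => /orP[/andP[/eqP eq_d d_a] | /andP[/eqP eq_a d_d]].
  by move: q_r; rewrite -eq_d ltn_ord d_a.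
by move: q_l; rewrite eq_a /= d_d.
Qed.

Definition toggle n (F : {set 'I_n}) (a : 'I_n) : {set 'I_n} :=
  if a \in F then F :\ a else a |: F.

Lemma mem_toggle n (F : {set 'I_n}) (a x : 'I_n) :
  (x \in toggle F a) = (x \in F) (+) (x == a).
Proof.
rewrite /toggle; case: ifP => aF; [rewrite in_setD1 | rewrite in_setU1];
  by case: eqP => [->|_]; rewrite ?aF ?addbT ?addbF.
Qed.

Lemma toggle_inj n (F : {set 'I_n}) : injective (toggle F).
Proof.
move=> a b eq_ab; have := mem_toggle F b a.
by rewrite -eq_ab mem_toggle eqxx => /addbI/esym/eqP.
Qed.

Lemma omega_adjP n (F G : {set 'I_n}) :
  reflect (exists a, G = toggle F a) (omega_adj F G).
Proof.
apply: (iffP orP) => [[/existsP[a /andP[aF /eqP->]] | /existsP[a /andP[aG /eqP eq_F]]] |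
                     [a ->]].
- by exists a; rewrite /toggle aF.
- have aF : a \notin F by rewrite eq_F setD11.
  by exists a; rewrite /toggle (negbTE aF) eq_F setD1K.
- rewrite /toggle; case: ifP => aF; [left | right]; apply/existsP; exists a.
    by rewrite aF eqxx.
  by rewrite setU11 setU1K ?aF ?eqxx.
Qed.

Lemma omega_degE n (F : {set 'I_n}) :
  omega_deg F = #|[set a | is_filter (toggle F a)]|.
Proof.
rewrite /omega_deg -(card_imset _ (@toggle_inj n F)); apply: eq_card => G.
rewrite inE; apply/andP/imsetP => [[G_filter /omega_adjP[a eq_G]] | [a]].
  by exists a; rewrite // inE -eq_G.
by rewrite inE => a_ok ->; split => //; apply/omega_adjP; exists a.
Qed.

Definition bits n (F : {set 'I_n}) : seq bool := [seq a \in F | a <- enum 'I_n].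

Lemma size_bits n (F : {set 'I_n}) : size (bits F) = n.
Proof. by rewrite size_map size_enum_ord. Qed.

Lemma nth_bits n (F : {set 'I_n}) (a : 'I_n) : nth false (bits F) a = (a \in F).
Proof. by rewrite (nth_map a) ?size_enum_ord // nth_ord_enum. Qed.

Definition step_ok (i : nat) (l r : bool) : bool := if descent i then r ==> l else l ==> r.

Definition filter_bits (s : seq bool) : bool :=
  all (fun i => step_ok i (nth false s i) (nth false s i.+1)) (iota 0 (size s).-1).

Lemma is_filter_bits n (F : {set 'I_n}) : is_filter F = filter_bits (bits F).
Proof.
rewrite is_filter_up_closed /filter_bits size_bits.
apply/up_closedP/allP => [F_up i | F_steps a b aF].
  rewrite mem_iota add0n => lt_i.
  have lt_i0 : i < n by lia.
  have lt_i1 : i.+1 < n by lia.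
  rewrite (nth_bits F (Ordinal lt_i0)) (nth_bits F (Ordinal lt_i1)) /step_ok.
  case: ifP => d_i; apply/implyP => /F_up; apply.
    by rewrite xi_coverE /xi_covn /= eqxx d_i orbT.
  by rewrite xi_coverE /xi_covn /= eqxx d_i.
rewrite xi_coverE /xi_covn => /orP[/andP[/eqP eq_b d_a] | /andP[/eqP eq_a d_b]].
  have := F_steps a; rewrite mem_iota /step_ok (negbTE d_a) -eq_b !nth_bits aF.
  by apply; have := ltn_ord b; lia.
have := F_steps b; rewrite mem_iota /step_ok d_b -eq_a !nth_bits aF.
by apply; have := ltn_ord a; lia.
Qed.

(* Whether the bit m at position i may be flipped, given the bits l and r at
   positions i-1 and i+1; has_r says whether position i+1 exists. *)
Definition toggle_ok (i : nat) (has_r l m r : bool) : bool :=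
  if m then ((has_r && descent i) ==> ~~ r) && ((0 < i) && ~~ descent i.-1 ==> ~~ l)
  else ((has_r && ~~ descent i) ==> r) && ((0 < i) && descent i.-1 ==> l).

Definition toggleable (s : seq bool) (i : nat) : bool :=
  toggle_ok i (i.+1 < size s) (nth false s i.-1) (nth false s i) (nth false s i.+1).

Lemma is_filter_toggle n (F : {set 'I_n}) (a : 'I_n) :
  is_filter F -> is_filter (toggle F a) = toggleable (bits F) a.
Proof.
rewrite !is_filter_up_closed /toggle /toggleable /toggle_ok size_bits nth_bits => F_up.
case: ifP => aF.
  rewrite (up_closedD1 (@xi_cover_irr n)) //.
  under eq_forallb => c do rewrite -nth_bits.
  exact: (forall_lower_cover a (fun c => ~~ nth false (bits F) c)).
rewrite (up_closedU1 (@xi_cover_irr n)) //.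
under eq_forallb => d do rewrite -nth_bits.
exact: (forall_upper_cover a (nth false (bits F))).
Qed.

Definition deg_bits (s : seq bool) : nat := count (toggleable s) (iota 0 (size s)).

Lemma omega_deg_bits n (F : {set 'I_n}) :
  is_filter F -> omega_deg F = deg_bits (bits F).
Proof.
move=> F_filter; rewrite omega_degE -sum1_card /deg_bits -sum1_count size_bits.
rewrite -val_enum_ord big_map big_enum_cond /=.
by apply: eq_bigl => a; rewrite inE is_filter_toggle.
Qed.

Lemma iotaSr m k : iota m k.+1 = rcons (iota m k) (m + k).
Proof. by rewrite -addn1 iotaD cats1. Qed.

Lemma count_iotaSr (P : pred nat) m k :
  count P (iota m k.+1) = count P (iota m k) + P (m + k).
Proof. by rewrite iotaSr -cats1 count_cat /= addn0. Qed.

Definition deg_belast (s : seq bool) : nat := count (toggleable s) (iota 0 (size s).-1).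

Lemma deg_bits_belast k s : size s = k.+2 ->
  deg_bits s = deg_belast s + toggle_ok k.+1 false (nth false s k) (nth false s k.+1) false.
Proof.
move=> s_k; rewrite /deg_bits /deg_belast s_k count_iotaSr /toggleable s_k ltnn.
by rewrite [nth false s k.+2]nth_default ?s_k.
Qed.

Lemma toggleable_rcons s r i :
  i.+1 < size s -> toggleable (rcons s r) i = toggleable s i.
Proof.
move=> lt_i; rewrite /toggleable size_rcons !nth_rcons.
have [lt_i1 lt_i0 lt_ip] : [/\ i.+1 < (size s).+1, i < size s & i.-1 < size s].
  by split; lia.
by rewrite lt_i lt_i1 lt_i0 lt_ip.
Qed.

Lemma deg_belast_rcons k s r : size s = k.+2 ->
  deg_belast (rcons s r) =
    deg_belast s + toggle_ok k.+1 true (nth false s k) (nth false s k.+1) r.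
Proof.
move=> s_k; rewrite /deg_belast size_rcons s_k count_iotaSr.
congr (_ + _).
  apply: eq_in_count => i; rewrite mem_iota => /andP[_ lt_i].
  by rewrite toggleable_rcons // s_k.
rewrite /toggleable size_rcons s_k !nth_rcons s_k add0n /=.
by rewrite ltnn !ltnSn eqxx ltnS leqnSn.
Qed.

Lemma filter_bits_rcons k s r : size s = k.+2 ->
  filter_bits (rcons s r) = filter_bits s && step_ok k.+1 (nth false s k.+1) r.
Proof.
move=> s_k; rewrite /filter_bits size_rcons s_k iotaSr all_rcons andbC.
rewrite !nth_rcons s_k add0n ltnSn ltnn eqxx; congr andb.
apply: eq_in_all => i; rewrite mem_iota => /andP[_ lt_i].
have [lt_i0 lt_i1] : i < k.+2 /\ i.+1 < k.+2 by split; lia.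
by rewrite !nth_rcons s_k lt_i0 lt_i1.
Qed.

Fixpoint bitseqs (k : nat) : seq (seq bool) :=
  if k is k'.+1 then [seq rcons s b | s <- bitseqs k', b <- [:: false; true]]
  else [:: [::]].

Lemma bitseqsS k :
  bitseqs k.+1 = [seq rcons s b | s <- bitseqs k, b <- [:: false; true]].
Proof. by []. Qed.

Lemma mem_bitseqs k s : (s \in bitseqs k) = (size s == k).
Proof.
elim: k s => [|k IHk] s; first by rewrite inE size_eq0.
apply/allpairsP/idP => [[[s' b] [/= s'_k _ ->]] | ].
  by rewrite size_rcons eqSS -IHk.
case/lastP: s => [//| s' b]; rewrite size_rcons eqSS -IHk => s'_k.
by exists (s', b); split => //=; case: b.
Qed.

Lemma uniq_bitseqs k : uniq (bitseqs k).
Proof.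
elim: k => [//| k IHk]; apply: allpairs_uniq => // [[s1 b1] [s2 b2]] _ _ /=.
by move/rcons_inj => [-> ->].
Qed.

Lemma bits_inj n : injective (@bits n).
Proof. by move=> F G eq_FG; apply/setP => a; rewrite -!nth_bits eq_FG. Qed.

Lemma perm_bitseqs n : perm_eq [seq bits F | F <- enum {set 'I_n}] (bitseqs n).
Proof.
apply: uniq_perm; first by rewrite (map_inj_uniq (@bits_inj n)) enum_uniq.
  exact: uniq_bitseqs.
move=> s; rewrite mem_bitseqs; apply/mapP/eqP => [[F _ ->] | s_n].
  exact: size_bits.
exists [set a : 'I_n | nth false s a]; first by rewrite mem_enum.
apply: (@eq_from_nth _ false) => [|i]; first by rewrite size_bits.
by rewrite s_n => lt_i; rewrite (nth_bits _ (Ordinal lt_i)) inE.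
Qed.

Local Open Scope ring_scope.

Definition Dseq (n : nat) : {poly int} :=
  \sum_(s <- bitseqs n | filter_bits s) 'X^(deg_bits s).

Lemma Dpoly_filters n :
  Dpoly n = \sum_(F : {set 'I_n} | is_filter F) 'X^(omega_deg F).
Proof.
pose deg_ord (F : {set 'I_n}) : 'I_(#|{set 'I_n}|).+1 := inord (omega_deg F).
rewrite /Dpoly (partition_big deg_ord xpredT) //=.
apply: eq_bigr => k _; rewrite scaler_nat /dnk -sumr_const.
apply: eq_big => F; rewrite inE; last by case/andP=> _ /eqP <-.
by congr (_ && _); rewrite -val_eqE /= inordK // ltnS max_card.
Qed.

Lemma Dpoly_Dseq n : Dpoly n = Dseq n.
Proof.
rewrite Dpoly_filters /Dseq -(perm_big _ (perm_bitseqs n)) big_map big_enum_cond /=.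
by apply: eq_big => [F | F F_filter]; rewrite ?is_filter_bits ?omega_deg_bits.
Qed.

(* Transfer-matrix state: filter bit strings of length k+2 ending with p, q,
   weighted by the positions whose toggleability no appended bit can change. *)
Definition Dend (k : nat) (p q : bool) : {poly int} :=
  \sum_(s <- bitseqs k.+2 |
         [&& filter_bits s, nth false s k == p & nth false s k.+1 == q])
    'X^(deg_belast s).

Lemma Dend0 p q :
  Dend 0 p q = if step_ok 0 p q then 'X^(toggle_ok 0 true p p q) else 0.
Proof.
by rewrite /Dend /= !big_cons big_nil; case: p; case: q; rewrite /= ?addr0 ?add0r.
Qed.

Lemma Dend_step k q r : Dend k.+1 q r =
  if step_ok k.+1 q r then \sum_(p : bool) 'X^(toggle_ok k.+1 true p q r) * Dend k p q
  else 0.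
Proof.
rewrite /Dend bitseqsS big_mkcond big_allpairs_dep.
case: ifP => step_qr.
  under [RHS]eq_bigr => p _ do rewrite big_distrr big_mkcond /=.
  rewrite [RHS]exchange_big !big_seq; apply: eq_bigr => s.
  rewrite mem_bitseqs => /eqP s_k.
  rewrite !big_cons !big_nil !(filter_bits_rcons _ s_k) !(deg_belast_rcons _ s_k).
  rewrite !nth_rcons s_k ltnSn ltnn eqxx big_bool.
  case: (nth false s k) (nth false s k.+1) (filter_bits s) => [] [] [];
    case: q r step_qr => [] [] step_qr;
    by rewrite /= ?step_qr ?andbF ?andbT ?addr0 ?add0r ?exprD
               ?(mulrC 'X^(deg_belast s)).
rewrite big1_seq // => s; rewrite mem_bitseqs => /eqP s_k.
rewrite !big_cons big_nil !(filter_bits_rcons _ s_k) !nth_rcons s_k ltnSn ltnn eqxx.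
by case: (nth false s k.+1) (filter_bits s) => [] [];
  case: q r step_qr => [] [] step_qr; rewrite /= ?step_qr ?andbF ?addr0.
Qed.

Lemma Dseq_Dend k :
  Dseq k.+2 =
    \sum_(p : bool) \sum_(q : bool) 'X^(toggle_ok k.+1 false p q false) * Dend k p q.
Proof.
rewrite /Dseq /Dend.
under [RHS]eq_bigr => p _ do under eq_bigr => q _ do rewrite big_distrr big_mkcond.
under [RHS]eq_bigr => p _ do rewrite exchange_big.
rewrite [RHS]exchange_big big_mkcond !big_seq; apply: eq_bigr => s.
rewrite mem_bitseqs => /eqP s_k; rewrite (deg_bits_belast s_k) !big_bool.
case: (nth false s k) (nth false s k.+1) (filter_bits s) => [] [] [];
  by rewrite /= ?addr0 ?add0r ?exprD ?(mulrC 'X^(deg_belast s)).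
Qed.

Lemma Dseq_small n : (n < 6)%N -> Dseq n = nth 0
  [:: 1; 2%:R * 'X; 2%:R * 'X + 'X^2; 2%:R * 'X + 2%:R * 'X^2;
      'X + 3%:R * 'X^2 + 3%:R * 'X^3; 5%:R * 'X^2 + 4%:R * 'X^3 + 2%:R * 'X^4] n.
Proof.
case: n => [|[|[|[|[|[|n]]]]]] // _.
- by rewrite /Dseq big_cons big_nil /= addr0 expr0.
- by rewrite /Dseq !big_cons big_nil /= addr0 expr1 mulr2n mulrDl mul1r.
all: rewrite Dseq_Dend !big_bool; do ?rewrite !Dend_step !big_bool.
all: by rewrite !Dend0 /=; ring.
Qed.

Lemma Dseq_rec n : (3 <= n)%N ->
  Dseq n.+3 = 'X * Dseq n.+2 + 'X * Dseq n.+1 + ('X - 'X^2) * Dseq n.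
Proof.
case: n => [|[|[|j]]] // _.
rewrite !Dseq_Dend !big_bool ![Dend j.+4 _ _]Dend_step !big_bool.
rewrite ![Dend j.+3 _ _]Dend_step !big_bool ![Dend j.+2 _ _]Dend_step !big_bool.
by rewrite /toggle_ok /step_ok /descent /=; case: (odd j); rewrite /=; ring.
Qed.

Lemma genDenE : genDen = Poly [:: 1; - 'X; - 'X; 'X^2 - 'X].
Proof. by rewrite /= !cons_poly_def /genDen /xv /yv; ring. Qed.

Lemma genRHSnumE : genRHSnum =
  Poly [:: 1; 'X; 'X - 'X^2; 'X - 'X^2 - 'X^3; 2%:R * 'X^3 - 3%:R * 'X^2 + 'X].
Proof. by rewrite /= !cons_poly_def /genRHSnum /genNum /genDen /xv /yv; ring. Qed.

Theorem mainTheorem18 : forall n : nat,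
  \sum_(k < n.+1) genDen`_k * Dpoly (n - k) = genRHSnum`_n.
Proof.
move=> n; rewrite genRHSnumE coef_Poly.
under eq_bigr => k _ do rewrite genDenE coef_Poly Dpoly_Dseq.
case: n => [|[|[|[|[|[|n]]]]]];
  rewrite ?big_ord_recl ?big_ord0 /= ?bump0 ?subSS ?subn0; last first.
  rewrite big1 => [|k _]; last by rewrite mul0r.
  by rewrite Dseq_rec //; ring.
all: by rewrite !Dseq_small //=; ring.
Qed.
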